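(* Let $T>0$, $p>1$, $E_1\ge0$, $\epsilon\in(0,1)$. Let $\varphi,\varphi_\epsilon\in L^2(\mathbb{R})$ with $\|\varphi-\varphi_\epsilon\|\le\epsilon$, and let $u$ be the exact solution of the backward heat problem with final value $\varphi$, satisfying $\|u(\cdot,0)\|\le E_1$. Choose $\beta=\epsilon^p$ and let $v_\epsilon=R_\beta\varphi_\epsilon$. Then for every $t\in[0,T]$, $$\|u(\cdot,t)-v_\epsilon(\cdot,t)\|\le \epsilon^{\frac{t}{T}}(E_1+1).$$
   Context: $\|\cdot\|$ denotes the norm of $L^2(\mathbb{R})$. The Fourier transform is $\hat\psi(\xi)=\frac{1}{\sqrt{2\pi}}\int_{-\infty}^{\infty}\psi(x)e^{-i\xi x}\,dx$ (extended to $L^2(\mathbb{R})$ as a unitary map). Exact solution: for $\varphi\in L^2(\mathbb{R})$, the exact solution $u$ of $u_t-u_{xx}=0$ on $\mathbb{R}\times(0,T)$, $u(\cdot,T)=\varphi$, is given by $\hat u(\xi,t)=e^{(T-t)\xi^2}\hat\varphi(\xi)$ for $t\in[0,T]$; it is assumed that $u(\cdot,0)\in L^2(\mathbb{R})$. Regularized solution: for $\beta>0$ and $\psi\in L^2(\mathbb{R})$, $R_\beta\psi$ is the function whose Fourier transform in $x$ is $\widehat{(R_\beta\psi)}(\xi,t)=\frac{e^{-t\xi^2}}{\beta e^{(p-1)T\xi^2}+e^{-T\xi^2}}\hat\psi(\xi)=\frac{e^{(T-t)\xi^2}}{1+\beta e^{pT\xi^2}}\hat\psi(\xi)$, $t\in[0,T]$.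 *)

From HB Require Import structures.
From mathcomp Require Import all_boot all_order all_algebra.
From mathcomp Require Import all_classical all_reals all_analysis.
From mathcomp Require Import complex.
Set Implicit Arguments. Unset Strict Implicit. Unset Printing Implicit Defensive.
Import Order.TTheory GRing.Theory Num.Theory.
Local Open Scope ring_scope.
Local Open Scope classical_set_scope.

Section BackwardHeat.
Context {R : realType}.
Local Notation mu := (@lebesgue_measure R).

Definition cRe (z : R[i]) : R := complex.Re z.
Definition cIm (z : R[i]) : R := complex.Im z.

Definition sq_integrand (f : R -> R[i]) (x : R) : R :=
  cRe (f x) ^+ 2 + cIm (f x) ^+ 2.

Definition L2 (f : R -> R[i]) : Prop :=
  measurable_fun setT (cRe \o f) /\ measurable_fun setT (cIm \o f) /\
  (\int[mu]_x (sq_integrand f x)%:E < +oo)%E.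

Definition L2norm (f : R -> R[i]) : R :=
  Num.sqrt (fine (\int[mu]_x (sq_integrand f x)%:E)).

Definition L1 (f : R -> R[i]) : Prop :=
  mu.-integrable setT (EFin \o (cRe \o f)) /\
  mu.-integrable setT (EFin \o (cIm \o f)).

Definition fourier_integral (f : R -> R[i]) (xi : R) : R[i] :=
  let g := fun x => f x * Complex (cos (xi * x)) (- sin (xi * x)) in
  real_complex R (Num.sqrt (2 * pi))^-1 *
    Complex (Rintegral mu setT (cRe \o g)) (Rintegral mu setT (cIm \o g)).

Definition ae_eq (f g : R -> R[i]) : Prop := {ae mu, forall x, f x = g x}.

(* F is the Fourier transform on L^2(R): the (unitary) extension of the
   Fourier integral from L^1 \cap L^2 to L^2, acting on representatives. *)
Definition is_L2_fourier (F : (R -> R[i]) -> R -> R[i]) : Prop :=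
  (forall f, L2 f -> L2 (F f)) /\
      (forall f g, L2 f -> L2 g -> ae_eq f g -> ae_eq (F f) (F g)) /\
      (forall f g (a b : R[i]), L2 f -> L2 g ->
          ae_eq (F (fun x => a * f x + b * g x)) (fun xi => a * F f xi + b * F g xi)) /\
      (forall f, L2 f -> L2norm (F f) = L2norm f) /\
      (forall g, L2 g -> exists f, L2 f /\ ae_eq (F f) g) /\
      (forall f, L2 f -> L1 f -> ae_eq (F f) (fourier_integral f)).

(* u (written u x t) is the exact solution of u_t - u_xx = 0, u(.,T) = phi:
   u(.,t) in L^2 and \hat u(xi,t) = e^{(T-t) xi^2} \hat phi(xi), t in [0,T]. *)
Definition exact_solution (F : (R -> R[i]) -> R -> R[i]) (T : R)
    (phi : R -> R[i]) (u : R -> R -> R[i]) : Prop :=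
  forall t, 0 <= t <= T ->
    L2 (fun x => u x t) /\
    ae_eq (F (fun x => u x t))
          (fun xi => real_complex R (expR ((T - t) * xi ^+ 2)) * F phi xi).

Definition regularized_solution (F : (R -> R[i]) -> R -> R[i]) (T p beta : R)
    (psi : R -> R[i]) (v : R -> R -> R[i]) : Prop :=
  forall t, 0 <= t <= T ->
    L2 (fun x => v x t) /\
    ae_eq (F (fun x => v x t))
          (fun xi => real_complex R (expR ((T - t) * xi ^+ 2) /
                                     (1 + beta * expR (p * T * xi ^+ 2))) * F psi xi).

End BackwardHeat.

(* In Fourier variables, writing y = eps^p e^(pT xi^2),
     u^(t) - v^(t) = e^((T-t) xi^2) phi^ - e^((T-t) xi^2) / (1 + y) phie^
                   = k(xi) u^(0) + m(xi) (phi^ - phie^),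
   with k = e^(-t xi^2) y / (1 + y) and m = e^((T-t) xi^2) / (1 + y).  Putting
   L = ln eps + T xi^2, both k <= eps^(t/T) and m <= eps^(t/T - 1) reduce to
   e^(aL) <= 1 + e^(pL) for 0 <= a <= p, so Plancherel gives
   ||u(t) - v(t)|| <= eps^(t/T) E1 + eps^(t/T - 1) eps.  The triangle inequality
   in L^2 is obtained by integrating |x + y|^2 <= (1 + l)|x|^2 + (1 + 1/l)|y|^2
   and optimising over l > 0. *)

From Pilot Require Import Defs.
From HB Require Import structures.
From mathcomp Require Import all_boot all_order all_algebra.
From mathcomp Require Import all_classical all_reals all_analysis.
From mathcomp Require Import complex.
From mathcomp Require Import ring lra.
From mathcomp Require Import measurable_realfun.
Set Implicit Arguments. Unset Strict Implicit. Unset Printing Implicit Defensive.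
Import Order.TTheory GRing.Theory Num.Theory.
Local Open Scope ring_scope.

Section WeightedSquares.
Context {R : realFieldType}.

Lemma sqrD_le_weighted (l x y : R) : 0 < l ->
  (x + y) ^+ 2 <= (1 + l) * x ^+ 2 + (1 + l^-1) * y ^+ 2.
Proof.
move=> l0.
have -> : (1 + l) * x ^+ 2 + (1 + l^-1) * y ^+ 2 =
          (x + y) ^+ 2 + l^-1 * (l * x - y) ^+ 2 by field; rewrite gt_eqF.
by rewrite lerDl mulr_ge0 ?sqr_ge0 // invr_ge0 ltW.
Qed.

(* Take [l = b / a]; when [a = 0], let [l] grow instead. *)
Lemma le_sqrD_of_weighted (X a b : R) : 0 <= a -> 0 < b ->
  (forall l, 0 < l -> X <= (1 + l) * a ^+ 2 + (1 + l^-1) * b ^+ 2) ->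
  X <= (a + b) ^+ 2.
Proof.
move=> a0 b0; have [->|a_neq0] := eqVneq a 0 => H.
- apply/ler_addgt0Pr => del del0.
  have := H (b ^+ 2 / del) (divr_gt0 (exprn_gt0 2 b0) del0).
  have -> : (1 + (b ^+ 2 / del)^-1) * b ^+ 2 = b ^+ 2 + del
    by field; rewrite !gt_eqF.
  by rewrite expr0n mulr0 !add0r.
- have ap : 0 < a by rewrite lt0r a_neq0.
  have := H (b / a) (divr_gt0 b0 ap).
  have -> : (1 + b / a) * a ^+ 2 + (1 + (b / a)^-1) * b ^+ 2 = (a + b) ^+ 2
    by field; rewrite !gt_eqF.
  by [].
Qed.

End WeightedSquares.

Section SquaredModulus.
Context {R : realType}.

Definition sqnormc (z : R[i]) : R := cRe z ^+ 2 + cIm z ^+ 2.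

Lemma sqnormc_ge0 (z : R[i]) : 0 <= sqnormc z.
Proof. by rewrite addr_ge0 ?sqr_ge0. Qed.

Lemma sqnormc_scale_add_le (l a b al be : R) (z w : R[i]) :
  0 < l -> 0 <= a <= al -> 0 <= b <= be ->
  sqnormc (real_complex R a * z + real_complex R b * w) <=
  (1 + l) * al ^+ 2 * sqnormc z + (1 + l^-1) * be ^+ 2 * sqnormc w.
Proof.
move=> l0 /andP[a0 aal] /andP[b0 bbe].
have a2 : a ^+ 2 <= al ^+ 2 by rewrite ler_pXn2r // nnegrE (le_trans a0).
have b2 : b ^+ 2 <= be ^+ 2 by rewrite ler_pXn2r // nnegrE (le_trans b0).
case: z => z1 z2; case: w => w1 w2; rewrite /sqnormc /cRe /cIm /=.
rewrite !mul0r !subr0 !addr0.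
have := sqrD_le_weighted (a * z1) (b * w1) l0.
have := sqrD_le_weighted (a * z2) (b * w2) l0.
rewrite !exprMn => h2 h1.
have e1 : 0 <= (1 + l) * (al ^+ 2 - a ^+ 2) * (z1 ^+ 2 + z2 ^+ 2).
  by rewrite !mulr_ge0 ?subr_ge0 ?addr_ge0 ?sqr_ge0 // ltW.
have e2 : 0 <= (1 + l^-1) * (be ^+ 2 - b ^+ 2) * (w1 ^+ 2 + w2 ^+ 2).
  by rewrite !mulr_ge0 ?subr_ge0 ?addr_ge0 ?sqr_ge0 ?invr_ge0 // ltW.
apply: le_trans (lerD h1 h2) _; lra.
Qed.

Lemma sq_integrandE (f : R -> R[i]) x : sq_integrand f x = sqnormc (f x).
Proof. by []. Qed.

Lemma scale_sub_split (c d s : R) (A B : R[i]) : s != 0 ->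
  real_complex R c * A - real_complex R d * B =
  real_complex R ((c - d) / s) * (real_complex R s * A) +
  real_complex R d * (A - B).
Proof.
by move=> s0; rewrite mulrA -rmorphM /= divfK // rmorphB /=; ring.
Qed.

End SquaredModulus.

Section HeatMultipliers.
Context {R : realType}.

Lemma expR_mul_le1DexpR (a p L : R) : 0 <= a <= p ->
  expR (a * L) <= 1 + expR (p * L).
Proof.
move=> /andP[a0 ap]; have [L0|L0] := leP 0 L.
- apply: le_trans (_ : expR (p * L) <= _); last by rewrite lerDr.
  by rewrite ler_expR ler_wpM2r.
- apply: le_trans (_ : 1 <= _); last by rewrite lerDl ltW ?expR_gt0.
  by rewrite expR_le1 mulr_ge0_le0 // ltW.
Qed.

Variables (T t p eps : R).
Hypotheses (T0 : 0 < T) (t0 : 0 <= t) (tT : t <= T) (p1 : 1 <= p)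
  (eps0 : 0 < eps).

Let b := t / T.
Let L X := ln eps + T * X.

Let b_ge0 : 0 <= b. Proof. by rewrite divr_ge0 // ltW. Qed.
Let b_le1 : b <= 1. Proof. by rewrite ler_pdivrMr // mul1r. Qed.
Let tE : t = b * T. Proof. by rewrite /b divfK // gt_eqF. Qed.

Let powR_eps (x : R) : eps `^ x = expR (x * ln eps).
Proof. by rewrite /powR gt_eqF. Qed.

Let damping (X : R) : eps `^ p * expR (p * T * X) = expR (p * L X).
Proof. by rewrite powR_eps -expRD /L; congr expR; ring. Qed.

Let eps_pow_b (X : R) : eps `^ b = expR (b * L X) * expR (- (t * X)).
Proof. by rewrite powR_eps -expRD /L tE; congr expR; ring. Qed.

Lemma regularized_multiplier_bound (X : R) :
  0 <= expR ((T - t) * X) / (1 + eps `^ p * expR (p * T * X)) <= eps `^ b / eps.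
Proof.
rewrite damping; have y0 := expR_gt0 (p * L X).
have -> : expR ((T - t) * X) = expR ((1 - b) * L X) * (eps `^ b / eps).
  rewrite powR_eps -[X in _ / X](@lnK _ eps) ?posrE // -expRN -!expRD /L tE.
  by congr expR; ring.
have eb : 0 <= eps `^ b / eps by rewrite divr_ge0 ?powR_ge0 // ltW.
have y1 : 0 < 1 + expR (p * L X) by lra.
rewrite mulrAC mulr_ge0 // ?divr_ge0 ?expR_ge0 ?(ltW y1) //=.
rewrite ler_piMl // ler_pdivrMr ?mul1r //.
apply: expR_mul_le1DexpR; rewrite subr_ge0 b_le1 /=.
by apply: le_trans p1; rewrite gerBl.
Qed.

Lemma heat_gap_multiplier_bound (X : R) :
  0 <= (expR ((T - t) * X) -
        expR ((T - t) * X) / (1 + eps `^ p * expR (p * T * X))) / expR (T * X)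
    <= eps `^ b.
Proof.
rewrite damping (eps_pow_b X); set c := expR ((T - t) * X); set y := expR (p * L X).
have y0 : 0 < y := expR_gt0 _.
have -> : (c - c / (1 + y)) / expR (T * X) = expR (- (t * X)) * (y / (1 + y)).
  rewrite /c; have -> : (T - t) * X = - (t * X) + T * X by ring.
  rewrite expRD; field; rewrite !gt_eqF ?expR_gt0 //; lra.
rewrite mulr_ge0 ?divr_ge0 ?expR_ge0 ?(ltW y0) //=; last lra.
rewrite mulrC ler_wpM2r ?expR_ge0 // ler_pdivrMr; last lra.
rewrite {1}(_ : y = expR (b * L X) * expR ((p - b) * L X)); last first.
  by rewrite -expRD; congr expR; ring.
rewrite ler_wpM2l ?expR_ge0 //.
by apply: expR_mul_le1DexpR; rewrite subr_ge0 gerBl b_ge0 (le_trans b_le1 p1).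
Qed.

Lemma sqnormc_heat_error_le (l X : R) (A B Ut Vt U0 D : R[i]) : 0 < l ->
  Ut = real_complex R (expR ((T - t) * X)) * A ->
  Vt = real_complex R (expR ((T - t) * X) /
                       (1 + eps `^ p * expR (p * T * X))) * B ->
  U0 = real_complex R (expR (T * X)) * A ->
  D = A - B ->
  sqnormc (Ut - Vt) <=
  (1 + l) * (eps `^ b) ^+ 2 * sqnormc U0 +
  (1 + l^-1) * (eps `^ b / eps) ^+ 2 * sqnormc D.
Proof.
move=> l0 -> -> -> ->.
rewrite (@scale_sub_split _ _ _ (expR (T * X))) ?gt_eqF ?expR_gt0 //.
apply: sqnormc_scale_add_le => //.
- exact: heat_gap_multiplier_bound.
- exact: regularized_multiplier_bound.
Qed.

End HeatMultipliers.

Section L2Space.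
Context {R : realType}.
Local Notation mu := (@lebesgue_measure R).

Lemma L2norm_ge0 (f : R -> R[i]) : 0 <= L2norm f.
Proof. exact: sqrtr_ge0. Qed.

Lemma sq_integrand_ge0 (f : R -> R[i]) x : 0 <= sq_integrand f x.
Proof. exact: sqnormc_ge0. Qed.

Lemma measurable_sq_integrand (f : R -> R[i]) :
  measurable_fun setT (cRe \o f) -> measurable_fun setT (cIm \o f) ->
  measurable_fun setT (EFin \o sq_integrand f).
Proof.
by move=> mre mim; apply/measurable_EFinP; apply: measurable_funD;
  exact: measurable_funX.
Qed.

Lemma L2_measurable_sq (f : R -> R[i]) : L2 f ->
  measurable_fun setT (EFin \o sq_integrand f).
Proof. by case=> mre [mim _]; exact: measurable_sq_integrand. Qed.

Lemma integral_sq_integrand (f : R -> R[i]) : L2 f ->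
  (\int[mu]_x (sq_integrand f x)%:E = (L2norm f ^+ 2)%:E)%E.
Proof.
case=> _ [_ fin].
have i0 : (0 <= \int[mu]_x (sq_integrand f x)%:E)%E.
  by apply: integral_ge0 => x _; rewrite lee_fin sq_integrand_ge0.
by rewrite /L2norm sqr_sqrtr ?fine_ge0 // fineK // ge0_fin_numE.
Qed.

Lemma integral_sq_integrand_comb (K1 K2 : R) (f g : R -> R[i]) :
  0 <= K1 -> 0 <= K2 -> L2 f -> L2 g ->
  (\int[mu]_x (K1 * sq_integrand f x + K2 * sq_integrand g x)%:E =
   (K1 * L2norm f ^+ 2 + K2 * L2norm g ^+ 2)%:E)%E.
Proof.
move=> K10 K20 Lf Lg.
have sq0 (h : R -> R[i]) (x : R) : [set: R]%classic x -> (0 <= (sq_integrand h x)%:E)%E.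
  by rewrite lee_fin sq_integrand_ge0.
have Kf0 K (h : R -> R[i]) x : 0 <= K -> (0 <= (K * sq_integrand h x)%:E)%E.
  by move=> K0; rewrite lee_fin mulr_ge0 ?sq_integrand_ge0.
have mK K (h : R -> R[i]) : L2 h -> measurable_fun setT (fun x => (K * sq_integrand h x)%:E).
  by move=> Lh; apply/measurable_EFinP/measurable_funM => //;
    by apply/measurable_EFinP; exact: L2_measurable_sq.
under eq_integral => x _ do rewrite EFinD.
rewrite ge0_integralD //;
  [|by move=> x _; exact: Kf0|exact: mK|by move=> x _; exact: Kf0|exact: mK].
under eq_integral => x _ do rewrite EFinM.
rewrite ge0_integralZl_EFin //; [|exact: sq0|exact: L2_measurable_sq].
under [X in (_ + X)%E]eq_integral => x _ do rewrite EFinM.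
rewrite ge0_integralZl_EFin //; [|exact: sq0|exact: L2_measurable_sq].
by rewrite !integral_sq_integrand // -!EFinM -EFinD.
Qed.

Lemma L2_sub (f g : R -> R[i]) : L2 f -> L2 g -> L2 (fun x => f x - g x).
Proof.
move=> Lf Lg; have [mfr [mfi _]] := Lf; have [mgr [mgi _]] := Lg.
have mr : measurable_fun setT (cRe \o (fun x => f x - g x)).
  rewrite (_ : _ \o _ = (cRe \o f) \- (cRe \o g)); first exact: measurable_funB.
  by apply: funext => x /=; case: (f x) => ? ?; case: (g x).
have mi : measurable_fun setT (cIm \o (fun x => f x - g x)).
  rewrite (_ : _ \o _ = (cIm \o f) \- (cIm \o g)); first exact: measurable_funB.
  by apply: funext => x /=; case: (f x) => ? ?; case: (g x).
split=> //; split=> //.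
apply: (@le_lt_trans _ _
  (\int[mu]_x (2 * sq_integrand f x + 2 * sq_integrand g x)%:E)%E).
  apply: ge0_le_integral => //.
  - by move=> x _; rewrite lee_fin sq_integrand_ge0.
  - exact: measurable_sq_integrand.
  - by apply/measurable_EFinP; apply: measurable_funD; apply: measurable_funM => //;
      by apply/measurable_EFinP; exact: L2_measurable_sq.
  - move=> x _; rewrite lee_fin !sq_integrandE /sqnormc /cRe /cIm.
    case: (f x) => a b; case: (g x) => c d /=.
    have := sqr_ge0 (a + c); have := sqr_ge0 (b + d); rewrite !sqrrD; lra.
by rewrite integral_sq_integrand_comb // ltry.
Qed.

Lemma L2norm_sqr_le_ae (h f g : R -> R[i]) (K1 K2 : R) :
  0 <= K1 -> 0 <= K2 -> L2 h -> L2 f -> L2 g ->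
  {ae mu, forall x, sq_integrand h x <= K1 * sq_integrand f x + K2 * sq_integrand g x} ->
  L2norm h ^+ 2 <= K1 * L2norm f ^+ 2 + K2 * L2norm g ^+ 2.
Proof.
move=> K10 K20 Lh Lf Lg hfg.
rewrite -lee_fin -integral_sq_integrand // -integral_sq_integrand_comb //.
apply: ae_ge0_le_integral => //.
- by move=> x _; rewrite lee_fin sq_integrand_ge0.
- exact: L2_measurable_sq.
- by move=> x _; rewrite lee_fin addr_ge0 // mulr_ge0 // sq_integrand_ge0.
- by apply/measurable_EFinP; apply: measurable_funD; apply: measurable_funM => //;
    by apply/measurable_EFinP; exact: L2_measurable_sq.
- by near=> x => _; rewrite lee_fin; exact: (near hfg x).
Unshelve. all: by end_near.
Qed.

Lemma L2norm_le_weighted (h f g : R -> R[i]) (a b Mf Mg : R) :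
  L2 h -> L2 f -> L2 g -> L2norm f <= Mf -> L2norm g <= Mg ->
  0 <= a -> 0 < b -> 0 < Mg ->
  (forall l, 0 < l -> {ae mu, forall x, sq_integrand h x <=
     (1 + l) * a ^+ 2 * sq_integrand f x + (1 + l^-1) * b ^+ 2 * sq_integrand g x}) ->
  L2norm h <= a * Mf + b * Mg.
Proof.
move=> Lh Lf Lg fMf gMg a0 b0 Mg0 hfg.
have Nf0 := L2norm_ge0 f; have Ng0 := L2norm_ge0 g.
have Mf0 : 0 <= Mf := le_trans Nf0 fMf.
rewrite -(@ler_pXn2r _ 2) ?nnegrE ?L2norm_ge0 ?addr_ge0 ?mulr_ge0 ?(ltW b0) ?(ltW Mg0) //.
apply: le_sqrD_of_weighted => [||l l0]; rewrite ?mulr_ge0 ?mulr_gt0 //.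
have l1 : 0 <= 1 + l by lra.
have li1 : 0 <= 1 + l^-1 by rewrite addr_ge0 // invr_ge0 ltW.
have Kf0 : 0 <= (1 + l) * a ^+ 2 by rewrite mulr_ge0 ?sqr_ge0.
have Kg0 : 0 <= (1 + l^-1) * b ^+ 2 by rewrite mulr_ge0 ?sqr_ge0.
apply: le_trans (L2norm_sqr_le_ae Kf0 Kg0 Lh Lf Lg (hfg l l0)) _.
by apply: lerD; rewrite -mulrA ler_wpM2l // -exprMn ler_pXn2r ?nnegrE
  ?mulr_ge0 ?(ltW b0) ?(ltW Mg0) //; apply: ler_wpM2l => //; exact: ltW.
Qed.

End L2Space.

Section FourierTransform.
Context {R : realType}.
Variable F : (R -> R[i]) -> R -> R[i].
Hypothesis HF : is_L2_fourier F.

Lemma L2_fourier (f : R -> R[i]) : L2 f -> L2 (F f).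
Proof. by case: HF => FL2 _; exact: FL2. Qed.

Lemma L2norm_fourier (f : R -> R[i]) : L2 f -> L2norm (F f) = L2norm f.
Proof. by case: HF => _ [_ [_ [Fiso _]]]; exact: Fiso. Qed.

Lemma fourier_sub (f g : R -> R[i]) : L2 f -> L2 g ->
  Defs.ae_eq (F (fun x => f x - g x)) (fun xi => F f xi - F g xi).
Proof.
case: HF => _ [_ [Flin _]] Lf Lg.
have sub_lin (h k : R -> R[i]) : (fun x => h x - k x) = (fun x => 1 * h x + (-1) * k x).
  by apply: funext => x; rewrite mul1r mulN1r.
by rewrite sub_lin (sub_lin (F f)); exact: Flin.
Qed.

End FourierTransform.

(* The library's [Hint Extern] for almost-everywhere filters fails on
   [lebesgue_measure], so [near=>] needs this instance. *)
#[local] Instance lebesgue_ae_filter (R : realType) :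
  Filter (nbhs (almost_everywhere (@lebesgue_measure R))) :=
  ae_filter_ringOfSetsType _.

Theorem theorem3 (R : realType) (F : (R -> R[i]) -> R -> R[i])
  (HF : is_L2_fourier F)
  (T p E1 eps : R) (HT : 0 < T) (Hp : 1 < p) (HE1 : 0 <= E1)
  (Heps0 : 0 < eps) (Heps1 : eps < 1)
  (phi phie : R -> R[i]) (Hphi : L2 phi) (Hphie : L2 phie)
  (Hdist : L2norm (fun x => phi x - phie x) <= eps)
  (u : R -> R -> R[i]) (Hu : exact_solution F T phi u)
  (Hu0 : L2norm (fun x => u x 0) <= E1)
  (v : R -> R -> R[i]) (Hv : regularized_solution F T p (eps `^ p) phie v) :
  forall t, 0 <= t <= T ->
    L2norm (fun x => u x t - v x t) <= eps `^ (t / T) * (E1 + 1).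
Proof.
move=> t htT; have /andP[t0 tT] := htT.
have h0T : (0 : R) <= 0 <= T by rewrite lexx ltW.
have [Lut Fut] := Hu t htT; have [Lvt Fvt] := Hv t htT; have [Lu0 Fu0] := Hu 0 h0T.
have Ldiff := L2_sub Lut Lvt; have Lphid := L2_sub Hphi Hphie.
have Fdiff := fourier_sub HF Lut Lvt; have Fphid := fourier_sub HF Hphi Hphie.
rewrite -(L2norm_fourier HF Ldiff).
rewrite -(L2norm_fourier HF Lphid) in Hdist; rewrite -(L2norm_fourier HF Lu0) in Hu0.
set e := eps `^ (t / T); have e0 : 0 < e by rewrite powR_gt0.
have -> : e * (E1 + 1) = e * E1 + e / eps * eps by rewrite mulrDr mulr1 divfK ?gt_eqF.
apply: (L2norm_le_weighted (L2_fourier HF Ldiff) (L2_fourier HF Lu0)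
  (L2_fourier HF Lphid) Hu0 Hdist) => [||//|l l0]; rewrite ?divr_gt0 ?ltW //.
near=> x; rewrite !sq_integrandE (near Fdiff x) //.
apply: (sqnormc_heat_error_le HT t0 tT (ltW Hp) Heps0 (X := x ^+ 2) l0).
- exact: (near Fut x).
- exact: (near Fvt x).
- by rewrite (near Fu0 x) // subr0.
- exact: (near Fphid x).
Unshelve. all: by end_near.
Qed.
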